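(* Let $T$ be a tree on $n$ vertices with distance matrix $D$ and degree vector $d$. Then $d^\top D d = 4\mathbf{1}^\top D\mathbf{1} - 2(n-1)(2n-1)$.
   Context: $\mathbf{1}$ denotes the all-ones vector of length $n$; the distance matrix $D$ has $(a,b)$ entry equal to the graph distance between vertices $a$ and $b$ of $T$; $d$ is the vector whose $a$-th entry is the degree of vertex $a$. *)

From mathcomp Require Import all_boot all_order all_algebra.
Set Implicit Arguments. Unset Strict Implicit. Unset Printing Implicit Defensive.
Import GRing.Theory.

Definition simple_graph (T : finType) (e : rel T) : Prop :=
  symmetric e /\ irreflexive e.

Definition connected_graph (T : finType) (e : rel T) : Prop :=
  forall x y : T, connect e x y.

Definition has_cycle (T : finType) (e : rel T) : Prop :=
  exists s : seq T, [/\ 3 <= size s, uniq s & cycle e s].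

Definition is_tree (T : finType) (e : rel T) : Prop :=
  [/\ simple_graph e, connected_graph e & ~ has_cycle e].

Definition walk_len (T : finType) (e : rel T) (k : nat) (x y : T) : bool :=
  [exists s : k.-tuple T, path e x s && (last x s == y)].

(* graph distance: least k such that a walk of length k from x to y exists
   (searched among 0 .. #|T|-1, which suffices for a connected graph) *)
Definition gdist (T : finType) (e : rel T) (x y : T) : nat :=
  find (fun k => walk_len e k x y) (iota 0 #|T|).

Definition deg (T : finType) (e : rel T) (x : T) : nat := #|[set y | e x y]|.

Definition dist_mx (n : nat) (e : rel 'I_n) : 'M[int]_n :=
  \matrix_(a, b) Posz (gdist e a b).

Definition deg_vec (n : nat) (e : rel 'I_n) : 'cV[int]_n :=
  \col_a Posz (deg e a).

Definition ones (n : nat) : 'cV[int]_n := const_mx 1%R.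

(* Fix a vertex v.  In a tree, adjacent vertices have distances to v differing
   by exactly one, and every vertex u <> v has exactly one neighbour closer to v.
   Counting each edge from its end farther from v, the edge sum of
   d(x,v) + d(y,v) is sum_{w <> v} (2 d(w,v) - 1), that is
   sum_u deg(u) d(u,v) = 2 sum_u d(u,v) - (n - 1), or D d = 2 D 1 - (n - 1) 1.
   Using this twice, together with the handshake identity 1^T d = 2 (n - 1),
   gives the identity. *)

From mathcomp Require Import all_boot all_order all_algebra.
From mathcomp Require Import ring.
Import GRing.Theory.

Set Implicit Arguments.
Unset Strict Implicit.
Unset Printing Implicit Defensive.

Section GraphDistance.
Variables (T : finType) (e : rel T).
Hypothesis e_sym : symmetric e.
Hypothesis e_connected : connected_graph e.

Lemma walk_lenP k x y :
  reflect (exists s, [/\ size s = k, path e x s & last x s = y]) (walk_len e k x y).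
Proof.
apply: (iffP existsP) => [[s /andP[p /eqP l]] | [s [<- p l]]].
  by exists (val s); rewrite size_tuple.
by exists (in_tuple s); rewrite p l eqxx.
Qed.

Lemma has_walk_len x y : has (fun k => walk_len e k x y) (iota 0 #|T|).
Proof.
have /connectP[p e_p ->] := e_connected x y.
case: (shortenP e_p) => s e_s uniq_s _.
apply/hasP; exists (size s); last by apply/walk_lenP; exists s.
move/card_uniqP: uniq_s => /= size_s.
by rewrite mem_iota leq0n add0n -ltnS -size_s ltnS max_card.
Qed.

Lemma gdist_lt_card x y : gdist e x y < #|T|.
Proof. by rewrite -[X in _ < X](size_iota 0) -has_find has_walk_len. Qed.

Lemma gdistP x y :
  exists s, [/\ size s = gdist e x y, path e x s & last x s = y].
Proof.
apply/walk_lenP; have := nth_find 0 (has_walk_len x y).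
by rewrite nth_iota ?gdist_lt_card.
Qed.

Lemma gdist_min k x y : walk_len e k x y -> gdist e x y <= k.
Proof.
move=> walk_k; case: (ltnP k #|T|) => [k_lt | ]; last first.
  exact/leq_trans/ltnW/gdist_lt_card.
rewrite leqNgt; apply/negP => /(before_find 0).
by rewrite nth_iota // add0n walk_k.
Qed.

Lemma gdist_le [x s] : path e x s -> gdist e x (last x s) <= size s.
Proof. by move=> e_s; apply: gdist_min; apply/walk_lenP; exists s. Qed.

Lemma gdistxx x : gdist e x x = 0.
Proof. by apply/eqP; rewrite -leqn0; exact: (@gdist_le x [::]). Qed.

Lemma gdist_eq0 x y : (gdist e x y == 0) = (x == y).
Proof.
apply/eqP/eqP => [| ->]; last exact: gdistxx.
by have [[|a s] [<- _ <-]] := gdistP x y.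
Qed.

Lemma rev_walk [x s] :
  path e x s -> path e (last x s) (rev (belast x s)) /\
  last (last x s) (rev (belast x s)) = x.
Proof.
move=> e_s; split; first by rewrite rev_path; apply: sub_path e_s => a b; rewrite e_sym.
have revE : rev (x :: s) = last x s :: rev (belast x s) by rewrite lastI rev_rcons.
by have := congr1 (last x) revE; rewrite /= rev_cons last_rcons => <-.
Qed.

Lemma gdistC x y : gdist e x y = gdist e y x.
Proof.
suff le_rev a b : gdist e b a <= gdist e a b by apply/eqP; rewrite eqn_leq !le_rev.
have [s [<- e_s <-]] := gdistP a b; have [e_r last_r] := rev_walk e_s.
by rewrite -(size_belast a s) -size_rev; have := gdist_le e_r; rewrite last_r.
Qed.

Lemma gdist_edge u w v : e u w -> gdist e u v <= (gdist e w v).+1.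
Proof.
move=> e_uw; have [s [<- e_s <-]] := gdistP w v.
by apply: (@gdist_le u (w :: s)) => /=; rewrite e_uw.
Qed.

Lemma geodesic_uniq [x y s] :
  size s = gdist e x y -> path e x s -> last x s = y -> uniq (x :: s).
Proof.
move=> + e_s last_s; rewrite -last_s.
case: (shortenP e_s) => s' e_s' uniq_s' sub_s' size_s.
apply: (leq_size_uniq uniq_s').
  by move=> z; rewrite !inE => /orP[-> // | /sub_s' ->]; rewrite orbT.
by rewrite /= ltnS size_s gdist_le.
Qed.

Lemma gdist_lt_in_walk [x y s z] :
  path e x s -> last x s = y -> z \in s -> gdist e z y < size s.
Proof.
move=> e_s <- /splitPr s_split; case: s_split e_s => s1 s2.
rewrite cat_path last_cat /= size_cat /= addnS ltnS => /and3P[_ _ e_s2].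
exact/(leq_trans (gdist_le e_s2))/leq_addl.
Qed.

Section Tree.
Hypotheses (e_irr : irreflexive e) (e_acyclic : ~ has_cycle e).

Lemma acyclic_first_step_unique x a b p q :
  uniq [:: x, a & p] -> uniq [:: x, b & q] ->
  path e x (a :: p) -> path e x (b :: q) -> last a p = last b q -> a = b.
Proof.
move=> uniq_p uniq_q /= /andP[e_xa e_p] /andP[e_xb e_q] last_pq.
case: (eqVneq a b) => // neq_ab; exfalso.
have [e_qr last_qr] := rev_walk e_q.
pose w := p ++ rev (belast b q).
have e_w : path e a w by rewrite cat_path e_p last_pq e_qr.
have x_notin_w : x \notin w.
  rewrite mem_cat mem_rev negb_or; apply/andP; split.
    by case/andP: uniq_p; rewrite inE negb_or => /andP[].
  by apply/negP => /mem_belast; apply/negP; case/andP: uniq_q.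
have : last a w = b by rewrite last_cat last_pq last_qr.
case: (shortenP e_w) => c e_c uniq_c sub_c last_c.
apply: e_acyclic; exists [:: x, a & c]; split.
- by case: c {e_c uniq_c sub_c} last_c => [/= eq_ab | //]; rewrite eq_ab eqxx in neq_ab.
- rewrite cons_uniq uniq_c andbT inE negb_or (contra (@sub_c x)) // andbT.
  by case/andP: uniq_p; rewrite inE negb_or => /andP[].
- by rewrite /cycle rcons_path /= e_xa e_c last_c e_sym.
Qed.

Lemma gdist_adj_neq u w v : e u w -> gdist e u v != gdist e w v.
Proof.
move=> e_uw; apply/eqP => eq_d.
have [s [size_s e_s last_s]] := gdistP u v.
have [t [size_t e_t last_t]] := gdistP w v.
have neq_uw : u != w by apply: contraTneq e_uw => ->; rewrite e_irr.
case: s size_s e_s last_s => [|a s] size_s e_s last_s.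
  move/eqP: eq_d; rewrite -last_s /= gdistxx eq_sym gdist_eq0.
  by rewrite eq_sym (negPf neq_uw).
have e_as : path e a s by case/andP: e_s.
rewrite /= in last_s.
have eq_aw : a = w.
  apply: (acyclic_first_step_unique (geodesic_uniq size_s e_s last_s) _ e_s (q := t)).
  - rewrite cons_uniq (geodesic_uniq size_t e_t last_t) andbT inE negb_or neq_uw.
    by apply/negP => /(gdist_lt_in_walk e_t last_t); rewrite size_t -eq_d ltnn.
  - by rewrite /= e_uw.
  - by rewrite last_t -last_s.
by have := gdist_le e_as; rewrite last_s eq_aw -eq_d -size_s /= ltnn.
Qed.

Lemma closer_neighbour_unique u w1 w2 v : e u w1 -> e u w2 ->
  gdist e w1 v < gdist e u v -> gdist e w2 v < gdist e u v -> w1 = w2.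
Proof.
have uniq_walk w s : e u w -> gdist e w v < gdist e u v ->
    size s = gdist e w v -> path e w s -> last w s = v -> uniq [:: u, w & s].
  move=> e_uw lt_wu size_s e_s last_s.
  rewrite cons_uniq (geodesic_uniq size_s e_s last_s) andbT inE negb_or.
  apply/andP; split; first by apply: contraTneq e_uw => ->; rewrite e_irr.
  apply/negP => /(gdist_lt_in_walk e_s last_s); rewrite size_s => lt_uw.
  by have := ltn_trans lt_uw lt_wu; rewrite ltnn.
move=> e_uw1 e_uw2 lt1 lt2.
have [s1 [size1 e_s1 last1]] := gdistP w1 v.
have [s2 [size2 e_s2 last2]] := gdistP w2 v.
apply: (acyclic_first_step_unique (uniq_walk _ _ e_uw1 lt1 size1 e_s1 last1)
                                  (uniq_walk _ _ e_uw2 lt2 size2 e_s2 last2)).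
- by rewrite /= e_uw1.
- by rewrite /= e_uw2.
- by rewrite last1 last2.
Qed.

Lemma card_closer_neighbours u v :
  #|[pred w | e u w && (gdist e w v < gdist e u v)]| = (u != v).
Proof.
have [-> | neq_uv] := eqVneq u v.
  by apply: eq_card0 => w; rewrite inE gdistxx ltn0 andbF.
have [[|w s] [size_s e_s last_s]] := gdistP u v; first by rewrite -last_s eqxx in neq_uv.
case/andP: e_s => e_uw e_ws.
have lt_wu : gdist e w v < gdist e u v by rewrite -size_s ltnS -last_s gdist_le.
apply: eq_card1 => z; rewrite inE; apply/idP/eqP => [/andP[e_uz lt_zu] | ->].
  exact: closer_neighbour_unique e_uz e_uw lt_zu lt_wu.
by rewrite e_uw lt_wu.
Qed.

Lemma gdist_farther_neighbour u w v : e u w ->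
  gdist e u v <= gdist e w v -> gdist e w v = (gdist e u v).+1.
Proof.
move=> e_uw le_uw; apply/eqP; rewrite eqn_leq gdist_edge 1?e_sym //=.
by rewrite ltn_neqAle gdist_adj_neq.
Qed.

Local Open Scope ring_scope.

Lemma sum_closer_neighbours (R : nmodType) u v (x : R) :
  \sum_(w | e u w && (gdist e w v < gdist e u v)%N) x = x *+ (u != v).
Proof. by rewrite -card_closer_neighbours -sumr_const; apply: eq_bigl. Qed.

Lemma sum_neighbours_split (R : nmodType) u v (F : nat -> R) :
  \sum_(w | e u w) F (gdist e u v) =
  F (gdist e u v) *+ (u != v) +
  \sum_(w | e u w && (gdist e u v < gdist e w v)%N) F (gdist e w v).-1.
Proof.
rewrite (bigID (fun w => gdist e w v < gdist e u v)%N) /= sum_closer_neighbours.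
congr (_ + _); apply: eq_big => [w | w /andP[e_uw ge_uw]].
  case e_uw : (e u w) => //=.
  by rewrite [(gdist e u v < _)%N]ltn_neqAle gdist_adj_neq // -leqNgt.
by rewrite (gdist_farther_neighbour e_uw) // leqNgt.
Qed.

Lemma sum_farther_neighbours (R : nmodType) v (G : T -> R) :
  \sum_u \sum_(w | e u w && (gdist e u v < gdist e w v)%N) G w =
  \sum_(w | w != v) G w.
Proof.
rewrite (exchange_big_dep xpredT) //= [RHS]big_mkcond; apply: eq_bigr => w _.
rewrite -mulrb -(sum_closer_neighbours w v); apply: eq_bigl => u.
by rewrite e_sym.
Qed.

Lemma sum_neighbours_gdist (R : nmodType) v (F : nat -> R) :
  \sum_u \sum_(w | e u w) F (gdist e u v) =
  \sum_(u | u != v) F (gdist e u v) + \sum_(w | w != v) F (gdist e w v).-1.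
Proof.
rewrite (eq_bigr _ (fun u _ => sum_neighbours_split u v F)) big_split /=.
rewrite sum_farther_neighbours [in RHS]big_mkcond; congr (_ + _).
by apply: eq_bigr => u _; rewrite mulrb.
Qed.

Lemma sum_neighbours_const (R : nmodType) u (x : R) : \sum_(w | e u w) x = x *+ deg e u.
Proof. by rewrite /deg -sumr_const; apply: eq_bigl => w; rewrite inE. Qed.

Lemma sum_neq_const (R : nmodType) v (x : R) : \sum_(w : T | w != v) x = x *+ #|T|.-1.
Proof. by rewrite -(cardC1 v) -sumr_const. Qed.

Lemma sum_deg_gdist v :
  \sum_u (deg e u)%:Z * (gdist e u v)%:Z =
  2 * \sum_u (gdist e u v)%:Z - (#|T|%:Z - 1).
Proof.
have T_gt0 : (0 < #|T|)%N by apply/card_gt0P; exists v.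
under eq_bigr => u _ do rewrite -natz mulr_natl -sum_neighbours_const.
rewrite (sum_neighbours_gdist v (fun k => k%:Z)) /=.
have gdist_pred w : w != v -> ((gdist e w v).-1)%:Z = (gdist e w v)%:Z - 1.
  by move=> neq_wv; rewrite predn_int // lt0n gdist_eq0.
rewrite (eq_bigr _ gdist_pred) sumrB sum_neq_const -predn_int //.
rewrite [in RHS](bigD1 v) //= gdistxx add0r.
ring.
Qed.

Lemma sum_deg : (0 < #|T|)%N -> \sum_u (deg e u)%:Z = 2 * (#|T|%:Z - 1).
Proof.
move=> T_gt0; have [v _] := card_gt0P T_gt0.
under eq_bigr => u _ do rewrite -natz -[_%:R]sum_neighbours_const.
rewrite (sum_neighbours_gdist v (fun=> 1%R : int)) sum_neq_const !natz predn_int //.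
ring.
Qed.

Lemma sum_deg_gdist_deg : (0 < #|T|)%N ->
  \sum_k (\sum_l (deg e l)%:Z * (gdist e l k)%:Z) * (deg e k)%:Z =
  4 * \sum_k \sum_l (gdist e l k)%:Z - 2 * (#|T|%:Z - 1) * (2 * #|T|%:Z - 1).
Proof.
move=> T_gt0.
under eq_bigr => k _ do rewrite sum_deg_gdist mulrBl -mulrA mulr_suml.
rewrite sumrB -!mulr_sumr sum_deg // exchange_big /=.
under eq_bigr => l _ do under eq_bigr => k _ do rewrite gdistC mulrC.
under eq_bigr => l _ do rewrite sum_deg_gdist.
rewrite sumrB -mulr_sumr sumr_const -mulr_natl natz.
ring.
Qed.

End Tree.
End GraphDistance.

Local Open Scope ring_scope.

Lemma mx_quad_formE (R : pzSemiRingType) n (f g : 'I_n -> R) (a : 'I_n -> 'I_n -> R) :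
  (\col_i f i)^T *m (\matrix_(i, j) a i j) *m (\col_i g i) =
  (\sum_k (\sum_l f l * a l k) * g k)%:M.
Proof.
apply/matrixP => i j; rewrite !ord1 !mxE /= mulr1n; apply: eq_bigr => k _.
by rewrite !mxE; congr (_ * _); apply: eq_bigr => l _; rewrite !mxE.
Qed.

Lemma onesE n : ones n = \col_i 1.
Proof. by apply/matrixP => i j; rewrite !mxE. Qed.

Theorem corollary2p3 (n : nat) (e : rel 'I_n) :
  (0 < n)%N -> is_tree e ->
  (deg_vec e)^T *m dist_mx e *m deg_vec e =
  (4 *: ((ones n)^T *m dist_mx e *m ones n))
    - ((2 * (n%:Z - 1) * (2 * n%:Z - 1))%:M).
Proof.
move=> n_gt0 [[e_sym e_irr] e_connected e_acyclic].
rewrite onesE !mx_quad_formE sum_deg_gdist_deg ?card_ord //.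
rewrite scale_scalar_mx -raddfB; congr (_ - _)%:M; congr (_ * _).
by apply: eq_bigr => k _; rewrite mulr1; apply: eq_bigr => l _; rewrite mul1r.
Qed.
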